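(* Let $\mathscr{H}$ be a finite-dimensional complex Hilbert space, let $A=\{a_k\}_{k=1}^{m}$ be a tight frame of $\mathscr{H}$ with frame bound $\alpha>0$ and $B=\{b_j\}_{j=1}^{n}$ a tight frame of $\mathscr{H}$ with frame bound $\beta>0$, and suppose $A$ and $B$ are $s$-order incompatible. Let $$t_{\min}=\min\Big\{t\ :\ \text{for all } S\subsetneq I,\ T\subsetneq J \text{ with } |S|+|T|>t,\ \operatorname{span}\big(\{a_k\}_{k\in S}\cup\{b_j\}_{j\in T}\big)=\mathscr{H}\Big\},$$ where $I=\{1,\dots,m\}$ and $J=\{1,\dots,n\}$. Then $s+t_{\min}=m+n$.
   Context: A finite family $\{a_k\}_{k=1}^{m}\subset\mathscr{H}$ is a tight frame with frame bound $\alpha>0$ if $\sum_{k=1}^{m}|\langle x,a_k\rangle|^2=\alpha\|x\|^2$ for all $x\in\mathscr{H}$. The tight frames $A$ (bound $\alpha$) and $B$ (bound $\beta$) are called $s$-order incompatible, for an integer $s$, if: (1) for all nonempty $S\subseteq I$, $T\subseteq J$ with $|S|+|T|<s$ and every nonzero $x\in\mathscr{H}$, the two equalities $\sum_{k\in S}|\langle x,a_k\rangle|^2=\alpha\|x\|^2$ and $\sum_{j\in T}|\langle x,b_j\rangle|^2=\beta\|x\|^2$ do not both hold; and (2) there exist nonempty $S\subseteq I$, $T\subseteq J$ with $|S|+|T|=s$ and a nonzero $x\in\mathscr{H}$ for which both equalities hold. Spans are over $\mathbb{C}$; $S\subsetneq I$ denotes a proper (possibly empty) subset. *)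

From HB Require Import structures.
From mathcomp Require Import all_boot all_order all_algebra.
Set Implicit Arguments. Unset Strict Implicit. Unset Printing Implicit Defensive.
Import Order.TTheory GRing.Theory Num.Theory.
Local Open Scope ring_scope.

(* The finite-dimensional complex Hilbert space H is modelled as C^d = 'rV[C]_d
   with the standard inner product <x,y> = sum_i x_i * conj(y_i);
   C is any numeric algebraically closed field (e.g. the complex numbers). *)
Section Frames.
Variables (C : numClosedFieldType) (d : nat).

Definition dotp (x y : 'rV[C]_d) : C := \sum_(i < d) x 0 i * (y 0 i)^*.

Definition sqnorm (x : 'rV[C]_d) : C := dotp x x.

Definition frame_eq_on m (a : 'I_m -> 'rV[C]_d) (alpha : C)
    (S : {set 'I_m}) (x : 'rV[C]_d) : Prop :=
  \sum_(k in S) `|dotp x (a k)| ^+ 2 = alpha * sqnorm x.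

Definition tight_frame m (a : 'I_m -> 'rV[C]_d) (alpha : C) : Prop :=
  0 < alpha /\ forall x : 'rV[C]_d, frame_eq_on a alpha [set: 'I_m] x.

Definition s_order_incompatible m n (a : 'I_m -> 'rV[C]_d) (alpha : C)
    (b : 'I_n -> 'rV[C]_d) (beta : C) (s : nat) : Prop :=
  (forall (S : {set 'I_m}) (T : {set 'I_n}), S != set0 -> T != set0 ->
     (#|S| + #|T| < s)%N -> forall x : 'rV[C]_d, x != 0 ->
     ~ (frame_eq_on a alpha S x /\ frame_eq_on b beta T x))
  /\
  (exists (S : {set 'I_m}) (T : {set 'I_n}) (x : 'rV[C]_d),
     [/\ S != set0, T != set0, (#|S| + #|T|)%N = s, x != 0 &
         frame_eq_on a alpha S x /\ frame_eq_on b beta T x]).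

Definition spans_H m n (a : 'I_m -> 'rV[C]_d) (b : 'I_n -> 'rV[C]_d)
    (S : {set 'I_m}) (T : {set 'I_n}) : Prop :=
  (span ([seq a k | k in S] ++ [seq b j | j in T]) = fullv)%VS.

Definition spanning_threshold m n (a : 'I_m -> 'rV[C]_d)
    (b : 'I_n -> 'rV[C]_d) (t : nat) : Prop :=
  forall (S : {set 'I_m}) (T : {set 'I_n}),
    S != [set: 'I_m] -> T != [set: 'I_n] -> (t < #|S| + #|T|)%N ->
    spans_H a b S T.

End Frames.

From HB Require Import structures.
From mathcomp Require Import all_boot all_order all_algebra.
From mathcomp Require Import zify.
Set Implicit Arguments. Unset Strict Implicit. Unset Printing Implicit Defensive.
Import Order.TTheory GRing.Theory Num.Theory.
Local Open Scope ring_scope.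
Local Open Scope sesquilinear_scope.

(** For a tight frame, [\sum_(k in S) |<x, a_k>|^2 = alpha ||x||^2] holds
    exactly when [x] is orthogonal to every [a_k] with [k] outside [S], since
    the missing terms are nonnegative and sum to zero.  So a nonzero common
    solution [x] for [(S, T)] is the same thing as a nonzero vector orthogonal
    to the family indexed by the complements [(~: S, ~: T)], i.e. a witness
    that this family does not span.  Complementation exchanges nonempty with
    proper index sets and [|S| + |T|] with [m + n - |S| - |T|], so the least
    order of a common solution and the largest size of a non-spanning proper
    pair add up to [m + n]. *)

Section RowSpan.
Variables (F : fieldType) (d : nat).
Implicit Types (u : 'rV[F]_d) (X : seq 'rV[F]_d).

Definition mx_of_seq X : 'M[F]_(size X, d) := \matrix_(i < size X) X`_i.

Lemma mem_span_submx X u : (u \in span X) = (u <= mx_of_seq X)%MS.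
Proof.
apply/idP/idP => [uX | /submxP[D ->]].
  rewrite (coord_span (X := in_tuple X) uX); apply/summx_sub => i _.
  by apply/scalemx_sub; rewrite -(rowK (fun i : 'I_(size X) => X`_i)) row_sub.
rewrite mulmx_sum_row; apply/memv_suml => i _.
by rewrite rowK; apply/memvZ/memv_span/mem_nth.
Qed.

Lemma span_full_row_full X : (span X == fullv) = row_full (mx_of_seq X).
Proof.
rewrite -sub1mx; apply/eqP/idP => [X_full | M_full].
  by apply/row_subP => i; rewrite -mem_span_submx X_full memvf.
by apply/vspaceP => u; rewrite memvf mem_span_submx (submx_trans (submx1 u)).
Qed.

End RowSpan.

Section Orthogonality.
Variables (C : numClosedFieldType) (d : nat).
Implicit Types (x : 'rV[C]_d) (X : seq 'rV[C]_d).

Lemma row_full_orthogonalP k (M : 'M[C]_(k, d)) :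
  reflect (forall x, x *m M ^t* = 0 -> x = 0) (row_full M).
Proof.
have -> : row_full M = row_free (M ^t*).
  by rewrite /row_full /row_free mxrank_map mxrank_tr.
by rewrite -kermx_eq0; apply: (iffP rowV0P) => ker0 x /sub_kermxP; apply: ker0.
Qed.

Lemma mulmx_mx_of_seq_trC x X i : (x *m (mx_of_seq X) ^t*) 0 i = dotp x X`_i.
Proof. by rewrite !mxE; apply: eq_bigr => j _; rewrite !mxE. Qed.

Lemma span_fullP X :
  span X = fullv <-> forall x, {in X, forall v, dotp x v = 0} -> x = 0.
Proof.
rewrite (rwP eqP) span_full_row_full.
split => [/row_full_orthogonalP M_full x xX | X_ortho].
  apply: M_full; apply/rowP => i; rewrite mulmx_mx_of_seq_trC mxE.
  exact/xX/mem_nth.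
apply/row_full_orthogonalP => x /rowP xM.
apply: X_ortho => _ /(nthP 0)[i iX <-].
by have := xM (Ordinal iX); rewrite mulmx_mx_of_seq_trC mxE.
Qed.

End Orthogonality.

Lemma setC_eqT (T : finType) (A : {set T}) : (~: A == setT) = (A == set0).
Proof. by rewrite -setC0 (inj_eq (@setC_inj _)). Qed.

Lemma setC_eq0 (T : finType) (A : {set T}) : (~: A == set0) = (A == setT).
Proof. by rewrite -setCT (inj_eq (@setC_inj _)). Qed.

Lemma psumr_setC_eq0P (R : numDomainType) (I : finType) (S : {set I})
    (F : I -> R) :
  (forall i, 0 <= F i) ->
  \sum_(i in S) F i = \sum_i F i <-> forall i, i \notin S -> F i = 0.
Proof.
move=> F_ge0; rewrite [X in _ = X](bigID (mem S)) /= -[X in X = _]addr0.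
split => [/addrI/esym/psumr_eq0P F0 i iS | F0]; first exact: F0.
by rewrite [X in _ = _ + X]big1.
Qed.

Lemma tight_frame_eq_onP (C : numClosedFieldType) (d m : nat)
    (e : 'I_m -> 'rV[C]_d) (c : C) (e_tight : tight_frame e c)
    (S : {set 'I_m}) (x : 'rV[C]_d) :
  frame_eq_on e c S x <-> forall k, k \notin S -> dotp x (e k) = 0.
Proof.
rewrite /frame_eq_on -(e_tight.2 x).
under [X in _ = X]eq_bigl do rewrite in_setT.
rewrite psumr_setC_eq0P => [|k]; last by rewrite exprn_ge0.
split=> e0 k /e0; first by move/eqP; rewrite sqrf_eq0 normr_eq0 => /eqP.
by move->; rewrite normr0 expr0n.
Qed.

Section TightFrames.
Variables (C : numClosedFieldType) (d m n : nat).
Variables (a : 'I_m -> 'rV[C]_d) (alpha : C) (b : 'I_n -> 'rV[C]_d) (beta : C).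
Hypotheses (a_tight : tight_frame a alpha) (b_tight : tight_frame b beta).

Lemma spans_HP S T :
  spans_H a b S T <-> forall x, (forall k, k \in S -> dotp x (a k) = 0) ->
    (forall j, j \in T -> dotp x (b j) = 0) -> x = 0.
Proof.
rewrite /spans_H span_fullP; split => [ab_full x xa xb | ab_full x xab].
  apply: ab_full => v; rewrite mem_cat.
  by case/orP => [/imageP[k kS ->] | /imageP[j jT ->]]; auto.
by apply: ab_full => [k kS | j jT]; apply: xab; rewrite mem_cat image_f ?orbT.
Qed.

Lemma spans_H_setCP S T :
  spans_H a b (~: S) (~: T) <->
  forall x, frame_eq_on a alpha S x -> frame_eq_on b beta T x -> x = 0.
Proof.
rewrite spans_HP; split => ab_full x.
  move=> /(tight_frame_eq_onP a_tight) xa /(tight_frame_eq_onP b_tight) xb.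
  by apply: ab_full => [k | j]; rewrite in_setC; [apply: xa | apply: xb].
move=> xa xb; apply: ab_full.
- by apply/(tight_frame_eq_onP a_tight) => k kS; apply: xa; rewrite in_setC.
- by apply/(tight_frame_eq_onP b_tight) => j jT; apply: xb; rewrite in_setC.
Qed.

Lemma spanning_thresholdP t :
  spanning_threshold a b t <->
  forall S T x, S != set0 -> T != set0 -> x != 0 ->
    frame_eq_on a alpha S x -> frame_eq_on b beta T x ->
    (m + n <= #|S| + #|T| + t)%N.
Proof.
have cardsC_ord k (A : {set 'I_k}) : (#|A| + #|~: A| = k)%N.
  by rewrite cardsC card_ord.
split => [ab_span S T x Sn0 Tn0 xn0 xS xT | ab_large S T SnT TnT ST_large].
  rewrite leqNgt; apply/negP => ST_small.
  have /spans_H_setCP/(_ x xS xT) x0 : spans_H a b (~: S) (~: T).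
    apply: ab_span; rewrite ?setC_eqT //.
    by have := cardsC_ord _ S; have := cardsC_ord _ T; lia.
  by rewrite x0 eqxx in xn0.
rewrite -(setCK S) -(setCK T); apply/spans_H_setCP => x xS xT.
apply/eqP; apply: contraTT ST_large => xn0; rewrite -leqNgt.
have SCn0 : ~: S != set0 by rewrite setC_eq0.
have TCn0 : ~: T != set0 by rewrite setC_eq0.
have := ab_large _ _ x SCn0 TCn0 xn0 xS xT.
by have := cardsC_ord _ S; have := cardsC_ord _ T; lia.
Qed.

End TightFrames.

Theorem mainTheorem3 (C : numClosedFieldType) (d m n : nat)
    (a : 'I_m -> 'rV[C]_d) (alpha : C) (b : 'I_n -> 'rV[C]_d) (beta : C)
    (s : nat) :
  tight_frame a alpha -> tight_frame b beta ->
  s_order_incompatible a alpha b beta s ->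
  exists tmin : nat,
    [/\ spanning_threshold a b tmin,
        (forall t : nat, spanning_threshold a b t -> (tmin <= t)%N) &
        (s + tmin = m + n)%N].
Proof.
move=> a_tight b_tight [no_small].
move=> [S0 [T0 [x0 [S0n0 T0n0 card0 x0n0 [x0S0 x0T0]]]]].
have s_le_mn : (s <= m + n)%N.
  by rewrite -card0 leq_add // -[leqRHS]card_ord max_card.
exists (m + n - s)%N; split; last by rewrite subnKC.
- apply/(spanning_thresholdP a_tight b_tight) => S T x Sn0 Tn0 xn0 xS xT.
  have [small | large] := ltnP (#|S| + #|T|) s; last lia.
  by case: (no_small S T Sn0 Tn0 small x xn0).
- move=> t /(spanning_thresholdP a_tight b_tight).
  by move/(_ S0 T0 x0 S0n0 T0n0 x0n0 x0S0 x0T0); lia.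
Qed.
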